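(* For any $t\in[T]$ and $k,n,m\in[N]$, $$\Pr(x_o=n,\;x_t=m\mid x_{T+1}=k)=q^{(k)}_tP_{n,m}\mu_m+(1-q^{(k)}_t)\mu_n\mu_m.$$
   Context: Let $N,T$ be positive integers. Let $\mathbf{P}\in\mathbb{R}^{N\times N}$ have nonnegative entries with columns summing to $1$, and let $\boldsymbol\mu\in\mathbb{R}^N$ be a probability vector with $\mathbf{P}\boldsymbol\mu=\boldsymbol\mu$. Let $\mathbf{q}^{(1)},\dots,\mathbf{q}^{(N)}$ be probability vectors in $\mathbb{R}^T$. Random variables: $x_1,\dots,x_{T+1}$ i.i.d. with law $\boldsymbol\mu$ on $[N]$, and $x_o\in[N]$ with $\Pr(x_o=n\mid x_{T+1}=k,x_1,\dots,x_T)=\sum_{s=1}^Tq^{(k)}_sP_{n,x_s}$. *)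

From HB Require Import structures.
From mathcomp Require Import all_boot all_order all_algebra.
Set Implicit Arguments. Unset Strict Implicit. Unset Printing Implicit Defensive.
Import Order.TTheory GRing.Theory Num.Theory.
Local Open Scope ring_scope.

(* [N] is 'I_N, [T] is 'I_T (0-based indices).
   P : 'M_N with P n m = P_{n,m}; mu : 'cV_N; q k s = q^{(k)}_s. *)

Definition col_stochastic (R : realFieldType) (N : nat) (P : 'M[R]_N) : Prop :=
  (forall n m, 0 <= P n m) /\ (forall m, \sum_(n < N) P n m = 1).

Definition prob_cvec (R : realFieldType) (N : nat) (mu : 'cV[R]_N) : Prop :=
  (forall n, 0 <= mu n 0) /\ \sum_(n < N) mu n 0 = 1.

Definition prob_fun (R : realFieldType) (T : nat) (v : 'I_T -> R) : Prop :=
  (forall s, 0 <= v s) /\ \sum_(s < T) v s = 1.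

(* Conditional joint law of (x_1,...,x_T, x_o) given x_{T+1} = k:
   x_1..x_T are i.i.d. with law mu (independent of x_{T+1}), and
   Pr(x_o = n | x_{T+1}=k, x_1..x_T = y) = \sum_s q^{(k)}_s P_{n, y_s}. *)
Definition cond_law (R : realFieldType) (N T : nat) (P : 'M[R]_N)
  (mu : 'cV[R]_N) (q : 'I_N -> 'I_T -> R) (k : 'I_N)
  (y : {ffun 'I_T -> 'I_N}) (n : 'I_N) : R :=
  (\prod_(i < T) mu (y i) 0) * (\sum_(s < T) q k s * P n (y s)).

Definition cond_prob_xo_xt (R : realFieldType) (N T : nat) (P : 'M[R]_N)
  (mu : 'cV[R]_N) (q : 'I_N -> 'I_T -> R) (k n : 'I_N) (t : 'I_T) (m : 'I_N)
  : R :=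
  \sum_(y : {ffun 'I_T -> 'I_N} | y t == m) cond_law P mu q k y n.

(* Given x_{T+1} = k, the law of x_o is the q^{(k)}-mixture over s of the
   columns P_{., x_s}, with x_1, ..., x_T i.i.d. of law mu.  The component
   s = t contributes P_{n,m} mu_m; for s <> t the coordinates x_s and x_t are
   independent, so the component contributes (P mu)_n mu_m = mu_n mu_m by
   stationarity of mu. *)

From HB Require Import structures.
From mathcomp Require Import all_boot all_order all_algebra.
From mathcomp Require Import ring.
Import Order.TTheory GRing.Theory Num.Theory.
Local Open Scope ring_scope.

Section PinnedProducts.

Context {R : comPzSemiRingType} {I J : finType}.

Lemma sum_ffun_at_prod (t : I) (m : J) (f : I -> J -> R) :
  \sum_(y : {ffun I -> J} | y t == m) \prod_i f i (y i)
    = f t m * \prod_(i | i != t) \sum_j f i j.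
Proof.
(* Pinning [y t = m] is the same as zeroing [f t] off [m]; then distribute. *)
pose g i j := if i == t then (if j == m then f i j else 0) else f i j.
have gE (y : I -> J) : \prod_i g i (y i) = if y t == m then \prod_i f i (y i) else 0.
  rewrite (bigD1 t) //= {1}/g eqxx; case: eqP => _; last by rewrite mul0r.
  by rewrite [RHS](bigD1 t) //=; congr (_ * _); apply: eq_bigr => i /negbTE hi; rewrite /g hi.
rewrite big_mkcond /=; under eq_bigr do rewrite -gE.
rewrite -bigA_distr_bigA (bigD1 t) //= {1}/g eqxx -big_mkcond big_pred1_eq.
by congr (_ * _); apply: eq_bigr => i /negbTE hi; apply: eq_bigr => j _; rewrite /g hi.
Qed.

Lemma sum_iid_at_mul_eval (w h : J -> R) (s t : I) (m : J) :
  \sum_j w j = 1 ->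
  \sum_(y : {ffun I -> J} | y t == m) (\prod_i w (y i)) * h (y s)
    = w m * (if s == t then h m else \sum_j w j * h j).
Proof.
move=> w1; pose f i j := w j * (if i == s then h j else 1).
have fE (y : I -> J) : \prod_i f i (y i) = (\prod_i w (y i)) * h (y s).
  by rewrite big_split /= -big_mkcond big_pred1_eq.
have f1 i : i != s -> \sum_j f i j = 1.
  by move=> /negbTE hi; rewrite -w1; apply: eq_bigr => j _; rewrite /f hi mulr1.
under eq_bigr do rewrite -fE.
rewrite sum_ffun_at_prod {1}/f; case: (eqVneq s t) => [<- | hst].
  by rewrite big1 ?mulr1 // => i /f1.
rewrite mulr1 (bigD1 s) //= [\prod_(i | _) _]big1 ?mulr1; last by move=> i /andP [_ /f1].
by congr (_ * _); apply: eq_bigr => j _; rewrite /f eqxx.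
Qed.

End PinnedProducts.

Theorem lemmaB1 (R : realFieldType) (N T : nat) (P : 'M[R]_N)
  (mu : 'cV[R]_N) (q : 'I_N -> 'I_T -> R)
  (hN : (0 < N)%N) (hT : (0 < T)%N)
  (hP : col_stochastic P) (hmu : prob_cvec mu) (hPmu : P *m mu = mu)
  (hq : forall k, prob_fun (q k))
  (t : 'I_T) (k n m : 'I_N) :
  cond_prob_xo_xt P mu q k n t m
  = q k t * P n m * mu m 0 + (1 - q k t) * mu n 0 * mu m 0.
Proof.
have Pmu : \sum_j mu j 0 * P n j = mu n 0.
  rewrite -[RHS](congr1 (fun M : 'cV_N => M n 0) hPmu) mxE.
  by apply: eq_bigr => j _; rewrite mulrC.
have q_off_t : \sum_(s | s != t) q k s = 1 - q k t.
  by rewrite -(hq k).2 [in RHS](bigD1 t) //= addrC addrK.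
rewrite /cond_prob_xo_xt /cond_law; under eq_bigr do rewrite mulr_sumr.
rewrite exchange_big /=; under eq_bigr => s _ do under eq_bigr do rewrite mulrCA.
under eq_bigr => s _ do
  rewrite -mulr_sumr (sum_iid_at_mul_eval (fun j => mu j 0) (P n) s t m hmu.2) Pmu.
rewrite (bigD1 t) //= eqxx.
under eq_bigr => s hs do rewrite (negbTE hs).
rewrite -mulr_suml q_off_t; ring.
Qed.
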